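(* There are infinitely many graphs $G$, each of which is a one-point union of regular graphs, such that $\chi_{la}(G)=2$.
   Context: A one-point union of graphs $H_1,\dots,H_r$ ($r\ge 2$) is the graph obtained from their disjoint union by choosing one vertex in each $H_i$ and identifying these $r$ vertices into a single vertex. For a connected graph $G=(V,E)$ with $q=|E|$, a local antimagic labeling is a bijection $f:E\to\{1,\dots,q\}$ such that adjacent vertices $x,y$ satisfy $f^+(x)\ne f^+(y)$, where $f^+(x)=\sum f(e)$ over edges $e$ incident to $x$; $\chi_{la}(G)$ is the minimum number of distinct values of $f^+$ over all local antimagic labelings of $G$. *)

From mathcomp Require Import all_boot.
Set Implicit Arguments. Unset Strict Implicit. Unset Printing Implicit Defensive.

Definition simple_graph (n : nat) (e : rel 'I_n) : Prop :=
  symmetric e /\ irreflexive e.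

Definition connected_graph (n : nat) (e : rel 'I_n) : Prop :=
  forall x y : 'I_n, connect e x y.

(* Each undirected edge {x,y} is represented once, as the pair (x,y) with x < y. *)
Definition edges (n : nat) (e : rel 'I_n) : {set 'I_n * 'I_n} :=
  [set p : 'I_n * 'I_n | (p.1 < p.2) && e p.1 p.2].

Definition vsum (n : nat) (e : rel 'I_n) (f : 'I_n * 'I_n -> nat) (x : 'I_n) : nat :=
  \sum_(p in edges e | (p.1 == x) || (p.2 == x)) f p.

(* Local antimagic labeling: f restricted to E is a bijection onto {1,...,|E|}
   (injective with values in {1..|E|}), and adjacent vertices get distinct sums. *)
Definition is_la_labeling (n : nat) (e : rel 'I_n) (f : 'I_n * 'I_n -> nat) : Prop :=
  {in edges e &, injective f} /\
  (forall p, p \in edges e -> 0 < f p <= #|edges e|) /\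
  (forall x y : 'I_n, e x y -> vsum e f x != vsum e f y).

Definition num_vsums (n : nat) (e : rel 'I_n) (f : 'I_n * 'I_n -> nat) : nat :=
  size (undup [seq vsum e f x | x <- enum 'I_n]).

Definition chi_la_eq (n : nat) (e : rel 'I_n) (k : nat) : Prop :=
  (exists f, is_la_labeling e f /\ num_vsums e f = k) /\
  (forall f, is_la_labeling e f -> k <= num_vsums e f).

Definition regular_on (n : nat) (e : rel 'I_n) (S : {set 'I_n}) : Prop :=
  exists d : nat, forall x, x \in S -> #|[set y in S | e x y]| = d.

(* G is a one-point union of r >= 2 regular graphs H_1..H_r: there is a cut vertex c
   (the identified vertex) and a partition of V \ {c} into r nonempty parts V_i
   with no edges between different parts, such that each H_i = G[V_i ∪ {c}] is regular. *)
Definition one_point_union_of_regular (n : nat) (e : rel 'I_n) : Prop :=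
  exists (c : 'I_n) (r : nat) (part : 'I_n -> 'I_r),
    2 <= r /\
    (forall i : 'I_r, exists v, v != c /\ part v = i) /\
    (forall x y, x != c -> y != c -> e x y -> part x = part y) /\
    (forall i : 'I_r, regular_on e (c |: [set v | (v != c) && (part v == i)])).

From mathcomp Require Import all_boot zify.
Set Implicit Arguments. Unset Strict Implicit. Unset Printing Implicit Defensive.

(* For K >= 2 and D = 2K + 1, glue K cycles of length 2D and one cycle of
   length 2K at a common vertex, the hub; this is a one-point union of
   2-regular graphs with D^2 - 1 edges.  On the j-th long cycle give the i-th
   edge the label (i/2) D + 2K - j for even i and (2K - i/2) D + j + 1 for
   odd i; on the short cycle use (K + 1 + i/2) D and (K - i/2) D.  Division by
   D with remainder recovers j and i from a label, so the labels are distinct,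
   and they all lie in [1, D^2 - 1], hence are exactly 1, ..., D^2 - 1.  Two
   consecutive labels of a cycle add up to D^2 or to D(D + 1) according to
   the parity of the vertex between them, and the two hub edges of the cycles
   contribute K D + (K + 2) D = D(D + 1) at the hub.  Since all cycles have
   even length, the vertex sums properly 2-colour the graph; two colours are
   needed as soon as there is an edge. *)

Lemma sum_pred2 (I : finType) (P : pred I) (F : I -> nat) (a b : I) :
  a != b -> P =1 pred2 a b -> \sum_(i | P i) F i = F a + F b.
Proof.
move=> ab Pab; rewrite (bigD1 a) ?Pab /= ?eqxx //; congr addn.
apply: big_pred1 => i /=; rewrite Pab /=.
by case: (eqVneq i a) => [->|]; rewrite ?(negbTE ab) ?andbT.
Qed.

Lemma num_vsumsE (n : nat) (e : rel 'I_n) (f : 'I_n * 'I_n -> nat) (s : seq nat) :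
  uniq s -> [seq vsum e f x | x <- enum 'I_n] =i s -> num_vsums e f = size s.
Proof.
move=> s_uniq vsums_s; apply: perm_size; apply: uniq_perm => //; first exact: undup_uniq.
by move=> v; rewrite mem_undup vsums_s.
Qed.

Lemma num_vsums_edge (n : nat) (e : rel 'I_n) (f : 'I_n * 'I_n -> nat) (x y : 'I_n) :
  is_la_labeling e f -> e x y -> 2 <= num_vsums e f.
Proof.
move=> [_ [_ f_la]] /f_la xy; rewrite /num_vsums -[2]/(size [:: vsum e f x; vsum e f y]).
apply: uniq_leq_size; first by rewrite /= inE xy.
by move=> v; rewrite !inE mem_undup => /orP [] /eqP ->; apply: map_f; rewrite mem_enum.
Qed.

(** * Graphs presented by a family of edges *)

Definition sort_pair (n : nat) (p : 'I_n * 'I_n) : 'I_n * 'I_n :=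
  if p.1 < p.2 then p else (p.2, p.1).

Lemma sort_pairC (n : nat) (x y : 'I_n) : sort_pair (y, x) = sort_pair (x, y).
Proof. by rewrite /sort_pair /=; case: ltngtP => // /val_inj ->. Qed.

Lemma sort_pair_id (n : nat) (p : 'I_n * 'I_n) : p.1 < p.2 -> sort_pair p = p.
Proof. by rewrite /sort_pair => ->. Qed.

Lemma sort_pair_lt (n : nat) (p : 'I_n * 'I_n) :
  p.1 != p.2 -> (sort_pair p).1 < (sort_pair p).2.
Proof. by case: p => x y; rewrite /sort_pair -val_eqE /=; case: (ltngtP x y). Qed.

Lemma sort_pairP (n : nat) (p q : 'I_n * 'I_n) :
  reflect (p = q \/ p = (q.2, q.1)) (sort_pair p == sort_pair q).
Proof.
case: p q => [x y] [x' y']; apply: (iffP eqP) => [|[] [-> ->] //]; last exact: sort_pairC.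
by rewrite /sort_pair /=; case: (ltnP x y); case: (ltnP x' y') => _ _ [] -> ->; auto.
Qed.

Lemma incident_sort_pair (n : nat) (p : 'I_n * 'I_n) (x : 'I_n) :
  ((sort_pair p).1 == x) || ((sort_pair p).2 == x) = (p.1 == x) || (p.2 == x).
Proof. by rewrite /sort_pair; case: ifP => //= _; rewrite orbC. Qed.

Section EdgeFamily.

Variables (n : nat) (I : finType) (D : {pred I}) (ends : I -> 'I_n * 'I_n).
Hypothesis ends_neq : {in D, forall d, (ends d).1 != (ends d).2}.
Hypothesis sort_pair_ends_inj : {in D &, injective (fun d => sort_pair (ends d))}.

Definition family_rel : rel 'I_n :=
  fun x y => [exists d in D, sort_pair (ends d) == sort_pair (x, y)].

Definition family_label (lab : I -> nat) (p : 'I_n * 'I_n) : nat :=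
  if [pick d in D | sort_pair (ends d) == p] is Some d then lab d else 0.

Lemma family_relP x y :
  reflect (exists2 d, d \in D & ends d = (x, y) \/ ends d = (y, x)) (family_rel x y).
Proof.
apply: (iffP existsP) => [[d /andP [Dd /sort_pairP]]|[d Dd /sort_pairP]]; first by exists d.
by exists d; rewrite Dd.
Qed.

Lemma family_rel_sym : symmetric family_rel.
Proof. by move=> x y; rewrite /family_rel sort_pairC. Qed.

Lemma family_rel_irr : irreflexive family_rel.
Proof.
move=> x; apply/family_relP => -[d Dd ends_d].
by have := ends_neq Dd; case: ends_d => ->; rewrite eqxx.
Qed.

Lemma edges_family : edges family_rel = [set sort_pair (ends d) | d in D].
Proof.
apply/setP => p; rewrite inE; apply/andP/imsetP => [[lt_p /existsP [d /andP [Dd]]]|].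
  by rewrite -surjective_pairing (sort_pair_id lt_p) => /eqP <-; exists d.
have lt_ends d : d \in D -> (sort_pair (ends d)).1 < (sort_pair (ends d)).2.
  by move=> Dd; apply/sort_pair_lt/ends_neq.
case=> d Dd ->; split; first exact: lt_ends.
by apply/existsP; exists d; rewrite Dd -surjective_pairing (sort_pair_id (lt_ends d Dd)) /=.
Qed.

Variable lab : I -> nat.

Lemma family_label_ends d : d \in D -> family_label lab (sort_pair (ends d)) = lab d.
Proof.
move=> Dd; rewrite /family_label; case: pickP => [d' /andP [Dd' /eqP]|/(_ d)].
  by move/sort_pair_ends_inj => -> //.
by rewrite Dd eqxx.
Qed.

Lemma card_edges_family : #|edges family_rel| = #|D|.
Proof. by rewrite edges_family card_in_imset. Qed.

Lemma vsum_family x :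
  vsum family_rel (family_label lab) x =
  \sum_(d in D | ((ends d).1 == x) || ((ends d).2 == x)) lab d.
Proof.
rewrite /vsum edges_family big_mkcondr big_imset //= [RHS]big_mkcondr.
by apply: eq_bigr => d Dd; rewrite incident_sort_pair family_label_ends.
Qed.

Lemma family_label_bij :
  {in D &, injective lab} -> {in D, forall d, 0 < lab d <= #|D|} ->
  {in edges family_rel &, injective (family_label lab)} /\
  (forall p, p \in edges family_rel -> 0 < family_label lab p <= #|edges family_rel|).
Proof.
rewrite card_edges_family edges_family => lab_inj lab_range; split.
  move=> _ _ /imsetP [d Dd ->] /imsetP [d' Dd' ->].
  by rewrite !family_label_ends // => /lab_inj ->.
by move=> _ /imsetP [d Dd ->]; rewrite family_label_ends // lab_range.
Qed.

End EdgeFamily.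

(** * Bouquets of cycles *)

Section Bouquet.

Variables (r W : nat) (len : 'I_r -> nat).
Hypothesis len_gt2 : forall j, 2 < len j.
Hypothesis len_leW : forall j, len j <= W.

Local Notation vertex := (option {jp : 'I_r * 'I_W.+1 | 0 < jp.2 < len jp.1}).

Definition hub : 'I_#|{: vertex}| := enum_rank None.

(* The positions 0 and len j are not inner, so insub sends them to the hub:
   the j-th cycle is vert j 0, vert j 1, ..., vert j (len j). *)
Definition vert (j : 'I_r) (p : nat) : 'I_#|{: vertex}| :=
  enum_rank (insub (j, inord p) : vertex).

(* (0, 0) codes the hub, which no inner position can be confused with. *)
Definition vert_pos (j : 'I_r) (p : nat) : nat * nat :=
  if 0 < p < len j then (nat_of_ord j, p) else (0, 0).

Lemma vert_eqE j p j' p' : p <= W -> p' <= W ->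
  (vert j p == vert j' p') = (vert_pos j p == vert_pos j' p').
Proof.
move=> pW p'W; rewrite /vert /vert_pos (inj_eq enum_rank_inj).
case: insubP => [u /= pj val_u|/negbTE /= pj];
  case: insubP => [u' /= pj' val_u'|/negbTE /= pj'];
  rewrite !inordK // in pj pj' *; rewrite ?pj ?pj' ?xpair_eqE //=.
- rewrite (inj_eq (@Some_inj _)) -(inj_eq val_inj) /= val_u val_u' !xpair_eqE.
  by rewrite -[inord p == _]val_eqE /= !inordK.
- by rewrite -[_ == None]/false; case: p pj {pW val_u} => // p; rewrite andbF.
- by rewrite -[None == _]/false; case: p' pj' {p'W val_u'} => // p'; rewrite andbF.
Qed.

Lemma vert_hubE j p : p <= W -> (vert j p == hub) = ~~ (0 < p < len j).
Proof.
move=> pW; rewrite /vert /hub (inj_eq enum_rank_inj).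
by case: insubP => [u /= | /negbTE /=]; rewrite inordK // => ->.
Qed.

Lemma vert0 j : vert j 0 = hub.
Proof. by apply/eqP; rewrite vert_hubE. Qed.

Variant vertex_spec : 'I_#|{: vertex}| -> Prop :=
  | VertexHub : vertex_spec hub
  | VertexInner j p of 0 < p < len j : vertex_spec (vert j p).

Lemma vertexP x : vertex_spec x.
Proof.
rewrite -(enum_valK x); case: (enum_val x) => [[[j p] /= pj]|]; last exact: VertexHub.
have -> : enum_rank (Some (exist _ (j, p) pj)) = vert j p.
  by rewrite /vert inord_val insubT; congr (enum_rank (Some _)); apply: val_inj.
exact: VertexInner.
Qed.

Definition cycle_edge : {pred 'I_r * 'I_W.+1} := [pred d : 'I_r * 'I_W.+1 | d.2 < len d.1].

Definition cycle_ends (d : 'I_r * 'I_W.+1) : 'I_#|{: vertex}| * 'I_#|{: vertex}| :=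
  (vert d.1 d.2, vert d.1 d.2.+1).

Definition bouquet : rel 'I_#|{: vertex}| := family_rel cycle_edge cycle_ends.

Lemma vert_succ_neq j i : i < len j -> vert j i != vert j i.+1.
Proof.
move=> ilen; move: (len_gt2 j) (len_leW j) => ? ?.
rewrite vert_eqE /vert_pos; try lia.
by do 2 case: ifP; rewrite xpair_eqE; lia.
Qed.

Lemma cycle_ends_neq : {in cycle_edge, forall d, (cycle_ends d).1 != (cycle_ends d).2}.
Proof. by case=> j i; rewrite inE; apply: vert_succ_neq. Qed.

Lemma sort_pair_cycle_ends_inj :
  {in cycle_edge &, injective (fun d => sort_pair (cycle_ends d))}.
Proof.
case=> j i [j' i']; rewrite !inE /= => ilen i'len /eqP /sort_pairP /= ends_eq.
suff /andP [/eqP/val_inj -> /eqP/val_inj ->] : (j == j' :> nat) && (i == i' :> nat) by [].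
move: (len_gt2 j) (len_leW j) (len_gt2 j') (len_leW j') => ? ? ? ?.
case: ends_eq => -[/eqP + /eqP]; rewrite !vert_eqE /vert_pos; try lia.
all: by do 4 case: ifP; rewrite ?xpair_eqE; lia.
Qed.

Lemma vert_incident j p d : 0 < p < len j -> d \in cycle_edge ->
  (vert d.1 d.2 == vert j p) || (vert d.1 d.2.+1 == vert j p) =
  (d == (j, inord p.-1)) || (d == (j, inord p)).
Proof.
case: d => j' i pj; rewrite inE /= => ilen.
move: (len_gt2 j) (len_leW j) (len_gt2 j') (len_leW j') => ? ? ? ?.
rewrite !vert_eqE /vert_pos; try lia.
rewrite !xpair_eqE -!val_eqE /= !inordK; try lia.
case: (eqVneq (j' : nat) j) => [/val_inj ->|ne].
all: by do 3 case: ifP; rewrite ?xpair_eqE; lia.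
Qed.

Lemma hub_incident d : d \in cycle_edge ->
  (vert d.1 d.2 == hub) || (vert d.1 d.2.+1 == hub) = (d.2 == 0 :> nat) || (d.2.+1 == len d.1).
Proof.
case: d => j i; rewrite inE /= => ilen; move: (len_gt2 j) (len_leW j) => ? ?.
by rewrite !vert_hubE; lia.
Qed.

Variable lab : 'I_r -> nat -> nat.

Definition bouquet_label : 'I_#|{: vertex}| * 'I_#|{: vertex}| -> nat :=
  family_label cycle_edge cycle_ends (fun d => lab d.1 d.2).

Lemma vsum_vert j p : 0 < p < len j ->
  vsum bouquet bouquet_label (vert j p) = lab j p.-1 + lab j p.
Proof.
move=> pj; have := len_leW j => ?.
rewrite vsum_family ?(sum_pred2 _ (a := (j, inord p.-1)) (b := (j, inord p))) /= ?inordK //;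
  try lia.
- by rewrite xpair_eqE eqxx -val_eqE /= !inordK; lia.
- move=> d /=; case: (boolP (d \in cycle_edge)) => [dE|dNE]; first exact: vert_incident.
  by apply/esym/norP; split; apply: contraNneq dNE => ->; rewrite inE /= inordK; lia.
- exact: cycle_ends_neq.
- exact: sort_pair_cycle_ends_inj.
Qed.

Lemma vsum_hub :
  vsum bouquet bouquet_label hub = \sum_j (lab j 0 + lab j (len j).-1).
Proof.
rewrite vsum_family; [|exact: cycle_ends_neq|exact: sort_pair_cycle_ends_inj].
rewrite (partition_big (fun d => d.1) predT) //=; apply: eq_bigr => j _.
move: (len_gt2 j) (len_leW j) => ? ?.
rewrite (sum_pred2 _ (a := (j, ord0)) (b := (j, inord (len j).-1))) /= ?inordK //; try lia.
  by rewrite xpair_eqE eqxx -val_eqE /= inordK; lia.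
move=> [j' i] /=; case: (eqVneq j' j) => [->|ne]; last by rewrite !xpair_eqE (negbTE ne) andbF.
rewrite /= andbT !xpair_eqE eqxx -!val_eqE /= inordK; try lia.
case: (boolP ((j, i) \in cycle_edge)) => [iE|]; first by rewrite (hub_incident iE) /=; lia.
by rewrite inE /= -leqNgt; lia.
Qed.

Lemma bouquet_sym : symmetric bouquet.
Proof. exact: family_rel_sym. Qed.

Lemma bouquet_irr : irreflexive bouquet.
Proof. exact/family_rel_irr/cycle_ends_neq. Qed.

Lemma bouquet_simple : simple_graph bouquet.
Proof. exact: (conj bouquet_sym bouquet_irr). Qed.

Lemma bouquet_step j i : i < len j -> bouquet (vert j i) (vert j i.+1).
Proof.
move=> ilen; have := len_leW j => ?.
apply/family_relP; exists (j, inord i); first by rewrite inE /= inordK //; lia.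
by left; rewrite /cycle_ends /= inordK //; lia.
Qed.

Lemma bouquet_vert j p y : 0 < p < len j ->
  bouquet (vert j p) y = (y == vert j p.-1) || (y == vert j p.+1).
Proof.
move=> pj; have := len_leW j => ?.
apply/family_relP/orP => [[d dE ends_d]|[] /eqP ->]; last 2 first.
- exists (j, inord p.-1); first by rewrite inE /= inordK; lia.
  by right; rewrite /cycle_ends /= inordK ?prednK //; lia.
- exists (j, inord p); first by rewrite inE /= inordK; lia.
  by left; rewrite /cycle_ends /= inordK //; lia.
have : (d == (j, inord p.-1)) || (d == (j, inord p)).
  rewrite -vert_incident //; move: ends_d; rewrite /cycle_ends.
  by case=> -[-> ->]; rewrite eqxx ?orbT.
have neq_pred : vert j p.-1 != vert j p.
  by rewrite -{2}(prednK (_ : 0 < p)) ?vert_succ_neq; lia.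
have neq_succ : vert j p.+1 != vert j p by rewrite eq_sym vert_succ_neq; lia.
case/orP => /eqP d_eq; move: ends_d; rewrite /cycle_ends d_eq /= !inordK ?prednK; try lia.
  by move=> [] /pair_equal_spec [E1 E2]; [rewrite E1 eqxx in neq_pred | rewrite E1 eqxx; left].
by move=> [] /pair_equal_spec [E1 E2]; [rewrite -E2 eqxx; right | rewrite E2 eqxx in neq_succ].
Qed.

Lemma bouquet_hub_vert j p : 0 < p < len j ->
  bouquet hub (vert j p) = (p == 1) || (p.+1 == len j).
Proof.
move=> pj; have := len_leW j => ?.
by rewrite bouquet_sym bouquet_vert // !(eq_sym hub) !vert_hubE; lia.
Qed.

Definition cycle_of (j0 : 'I_r) (x : 'I_#|{: vertex}|) : 'I_r :=
  if enum_val x is Some s then (val s).1 else j0.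

Definition branch (j0 j : 'I_r) : {set 'I_#|{: vertex}|} :=
  hub |: [set v | (v != hub) && (cycle_of j0 v == j)].

Lemma cycle_of_vert j0 j p : 0 < p < len j -> cycle_of j0 (vert j p) = j.
Proof.
move=> pj; have := len_leW j => ?.
rewrite /cycle_of /vert enum_rankK.
by case: insubP => [u _ -> //|/negP[]]; rewrite /= inordK //; lia.
Qed.

Lemma mem_branch_vert j0 j i : i <= len j -> vert j i \in branch j0 j.
Proof.
move=> ilen; have := len_leW j => ?.
rewrite !inE vert_hubE; last lia.
by case: (boolP (0 < i < len j)) => //= ij; rewrite cycle_of_vert.
Qed.

Lemma mem_branch_inner j0 j j' p : 0 < p < len j' -> (vert j' p \in branch j0 j) = (j' == j).
Proof.
move=> pj; have := len_leW j' => ?.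
by rewrite !inE vert_hubE ?pj ?cycle_of_vert //=; lia.
Qed.

Lemma branch_regular j0 j : regular_on bouquet (branch j0 j).
Proof.
move: (len_gt2 j) (len_leW j) => ? ?.
exists 2 => x; case: (vertexP x) => [|j' p pj] Bx.
  have -> : [set y in branch j0 j | bouquet hub y] = [set vert j 1; vert j (len j).-1].
    apply/setP => y; rewrite in_set in_set2; case: (vertexP y) => [|j'' q qj].
      by rewrite bouquet_irr andbF !(eq_sym hub) !vert_hubE; lia.
    move: (len_leW j'') => ?.
    rewrite mem_branch_inner // bouquet_hub_vert // !vert_eqE /vert_pos; try lia.
    case: (eqVneq j'' j) => [->|ne] /=; first by do 3 case: ifP; rewrite ?xpair_eqE; lia.
    have ne' : (j'' : nat) != j := ne.
    by do 3 case: ifP; rewrite ?xpair_eqE ?(negbTE ne); lia.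
  by rewrite cards2 vert_eqE /vert_pos; try lia; do 2 case: ifP; rewrite xpair_eqE; lia.
move: Bx; rewrite mem_branch_inner // => /eqP ej; subst j'.
have -> : [set y in branch j0 j | bouquet (vert j p) y] = [set vert j p.-1; vert j p.+1].
  apply/setP => y; rewrite in_set bouquet_vert // in_set2.
  by case: (boolP (_ || _)) => [/orP [] /eqP -> | ];
    rewrite ?andbF ?andbT // mem_branch_vert; lia.
by rewrite cards2 vert_eqE /vert_pos; try lia; do 2 case: ifP; rewrite xpair_eqE; lia.
Qed.

Lemma connect_hub_vert j i : i <= len j -> connect bouquet hub (vert j i).
Proof.
elim: i => [|i IH] ilen; first by rewrite vert0 connect0.
exact: connect_trans (IH (ltnW ilen)) (connect1 (bouquet_step ilen)).
Qed.

Lemma bouquet_connected : connected_graph bouquet.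
Proof.
have hub_connect x : connect bouquet hub x.
  by case: (vertexP x) => [|j p /andP [_ /ltnW]]; [exact: connect0 | exact: connect_hub_vert].
move=> x y; apply: connect_trans (hub_connect y).
by rewrite (sym_connect_sym bouquet_sym).
Qed.

Lemma bouquet_one_point_union : 1 < r -> one_point_union_of_regular bouquet.
Proof.
move=> r_gt1; pose j0 := Ordinal (ltnW r_gt1).
exists hub, r, (cycle_of j0); split=> //; split; [|split]; last exact: branch_regular.
  move=> j; have j1 : 0 < 1 < len j by have := len_gt2 j; lia.
  have W_gt0 : 0 < W by have := len_leW j; lia.
  by exists (vert j 1); rewrite vert_hubE ?cycle_of_vert ?j1.
move=> x y; case: (vertexP x) => [|j p pj]; first by rewrite eqxx.
case: (vertexP y) => [|j' q qj]; first by rewrite eqxx.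
move=> _ _; move: (len_leW j) (len_leW j') => ? ?.
rewrite !cycle_of_vert // bouquet_vert // !vert_eqE /vert_pos; try lia.
move=> adj; suff /eqP/val_inj : (j : nat) == j' by [].
by move: adj; do 3 case: ifP; rewrite ?xpair_eqE; lia.
Qed.

Lemma len_le_order j : len j <= #|{: vertex}|.
Proof.
rewrite -[len j]card_ord -[#|{: vertex}|]card_ord.
apply: (@leq_card _ _ (fun i : 'I_(len j) => vert j i)) => i i' /eqP.
move: (ltn_ord i) (ltn_ord i') (len_leW j) => ? ? ?.
rewrite vert_eqE /vert_pos; try lia; move=> E; suff /eqP/val_inj : (i : nat) == i' by [].
by move: E; do 2 case: ifP; rewrite ?xpair_eqE; lia.
Qed.

Lemma card_cycle_edge : #|cycle_edge| = \sum_j len j.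
Proof.
rewrite -sum1_card -(pair_big_dep xpredT (fun j (i : 'I_W.+1) => i < len j) (fun _ _ => 1)) /=.
apply: eq_bigr => j _.
by rewrite (big_ord_narrow (leqW (len_leW j))) big_const_ord iter_addn_0 mul1n.
Qed.

Lemma bouquet_edge_ind (P : rel 'I_#|{: vertex}|) : symmetric P ->
  (forall j i, i < len j -> P (vert j i) (vert j i.+1)) ->
  forall x y, bouquet x y -> P x y.
Proof.
move=> P_sym P_step x y /family_relP [[j i] /= ilen].
by rewrite /cycle_ends /= => -[] /pair_equal_spec [<- <-]; last rewrite P_sym; apply: P_step.
Qed.

End Bouquet.

(** * The labeling *)

Section Construction.

Variable K : nat.
Hypothesis K_gt1 : 1 < K.

Local Notation D := (2 * K + 1).

Definition cycle_len (j : 'I_K.+1) : nat := if j < K then 2 * D else 2 * K.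

Lemma cycle_len_gt2 j : 2 < cycle_len j.
Proof. by rewrite /cycle_len; case: ifP; lia. Qed.

Lemma cycle_len_le j : cycle_len j <= 2 * D.
Proof. by rewrite /cycle_len; case: ifP; lia. Qed.

Definition label (j : 'I_K.+1) (i : nat) : nat :=
  if j < K then (if odd i then (2 * K - i./2) * D + j.+1 else i./2 * D + (2 * K - j))
  else (if odd i then (K - i./2) * D else (K + 1 + i./2) * D).

Lemma label_add_pred j p : 0 < p < cycle_len j ->
  label j p.-1 + label j p = if odd p then D * D else D * (D + 1).
Proof.
rewrite /cycle_len /label; case: p => // q; rewrite /= uphalf_half.
have := odd_double_half q; have : j <= K := ltn_ord j.
case: (odd q) => /=; case: ifP => jK; set h := q./2; move=> ? ? ?; nia.
Qed.

Lemma label_ends j :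
  label j 0 + label j (cycle_len j).-1 = if j < K then D else (K + 2) * D.
Proof. by rewrite /label /cycle_len; case: ifP => jK; case: ifP => o; nia. Qed.

Lemma label_range j i : i < cycle_len j -> 0 < label j i < D * D.
Proof.
rewrite /cycle_len /label; have := odd_double_half i; have : j <= K := ltn_ord j.
by case: (odd i); case: ifP => jK; set h := i./2; move=> ? ? ?; nia.
Qed.

Lemma edivn_label j i : edivn (label j i) D =
  if j < K then (if odd i then (2 * K - i./2, j.+1) else (i./2, 2 * K - j))
  else (if odd i then (K - i./2, 0) else (K + 1 + i./2, 0)).
Proof.
have j_le : j <= K := ltn_ord j.
rewrite /label; case: ifP => jK; case: odd; rewrite ?edivn_eq //; try lia.
all: by rewrite -[X in edivn X _]addn0 edivn_eq ?addn1.
Qed.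

Lemma label_inj j j' i i' : i < cycle_len j -> i' < cycle_len j' ->
  label j i = label j' i' -> j = j' /\ i = i'.
Proof.
move=> ilen i'len /(congr1 (edivn^~ D)); rewrite !edivn_label => /eqP quot_rem_eq.
suff /andP [/eqP/val_inj -> /eqP] : (j == j' :> nat) && (i == i') by [].
move: quot_rem_eq ilen i'len; rewrite /cycle_len.
have := odd_double_half i; have := odd_double_half i'.
have : j <= K := ltn_ord j; have : j' <= K := ltn_ord j'.
by case: (odd i); case: (odd i'); case: ifP => jK; case: ifP => jK'; rewrite /= xpair_eqE; lia.
Qed.

Local Notation G := (@bouquet K.+1 (2 * D) cycle_len).
Local Notation f := (bouquet_label (W := 2 * D) (len := cycle_len) label).
Local Notation hub := (hub (2 * D) cycle_len).
Local Notation vert := (vert (2 * D) cycle_len).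

Lemma card_cycle_edge_label : #|cycle_edge (W := 2 * D) cycle_len| = D * D - 1.
Proof.
rewrite (card_cycle_edge cycle_len_le) big_ord_recr /= /cycle_len ltnn.
rewrite (eq_bigr (fun=> 2 * D)) => [|i _]; last by rewrite /= ltn_ord.
by rewrite big_const_ord iter_addn_0; nia.
Qed.

Lemma vsum_hub_label : vsum G f hub = D * (D + 1).
Proof.
rewrite vsum_hub; [|exact: cycle_len_gt2|exact: cycle_len_le].
rewrite (eq_bigr _ (fun j _ => label_ends j)) big_ord_recr /= ltnn.
rewrite (eq_bigr (fun=> D)) => [|i _]; last by rewrite /= ltn_ord.
by rewrite big_const_ord iter_addn_0; nia.
Qed.

Lemma vsum_label_vert j i : i <= cycle_len j ->
  vsum G f (vert j i) = if odd i then D * D else D * (D + 1).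
Proof.
move=> ilen; have := cycle_len_le j => ?.
case: (boolP (0 < i < cycle_len j)) => [ij|]; last first.
  move=> i_hub; rewrite (eqP (_ : vert j i == hub)) ?vsum_hub_label ?vert_hubE //; try lia.
  by move: i_hub ilen; rewrite /cycle_len; case: ifP => _; case: ifP => //; lia.
rewrite vsum_vert ?label_add_pred //; [exact: cycle_len_gt2|exact: cycle_len_le].
Qed.

Lemma vsum_label_adj x y : G x y -> vsum G f x != vsum G f y.
Proof.
move: x y.
apply: (@bouquet_edge_ind _ _ cycle_len (fun x y => vsum G f x != vsum G f y)).
  by move=> u v /=; rewrite eq_sym.
move=> j i ilen; rewrite (vsum_label_vert (ltnW ilen)) (vsum_label_vert ilen) /=.
by case: odd => /=; nia.
Qed.

Lemma label_la_labeling : is_la_labeling G f.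
Proof.
have lab_inj : {in cycle_edge (W := 2 * D) cycle_len &,
    injective (fun d : 'I_K.+1 * 'I_(2 * D).+1 => label d.1 d.2)}.
  by case=> j i [j' i'] ilen i'len /(label_inj ilen i'len) /= [-> /val_inj ->].
have lab_range : {in cycle_edge (W := 2 * D) cycle_len, forall d : 'I_K.+1 * 'I_(2 * D).+1,
    0 < label d.1 d.2 <= #|cycle_edge (W := 2 * D) cycle_len|}.
  by rewrite card_cycle_edge_label => -[j i] ilen; have := label_range ilen; lia.
have [f_inj f_range] := family_label_bij (cycle_ends_neq cycle_len_gt2 cycle_len_le)
  (sort_pair_cycle_ends_inj cycle_len_gt2 cycle_len_le) lab_inj lab_range.
by split; [|split; [|exact: vsum_label_adj]].
Qed.

Lemma num_vsums_label : num_vsums G f = 2.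
Proof.
apply: (@num_vsumsE _ _ _ [:: D * (D + 1); D * D]); first by rewrite /= inE; nia.
move=> v; apply/mapP/idP => [[x _ ->]|].
  case: (vertexP x) => [|j p /andP [_ /ltnW pj]]; first by rewrite vsum_hub_label inE eqxx.
  by rewrite vsum_label_vert //; case: odd; rewrite !inE eqxx ?orbT.
have pos1 : 1 <= cycle_len ord0 by have := cycle_len_gt2 ord0; lia.
rewrite !inE => /orP [] /eqP ->.
  by exists hub; rewrite ?mem_enum ?vsum_hub_label.
by exists (vert ord0 1); rewrite ?mem_enum ?vsum_label_vert.
Qed.

Lemma chi_la_bouquet : chi_la_eq G 2.
Proof.
split; first by exists f; split; [exact: label_la_labeling | exact: num_vsums_label].
move=> g /num_vsums_edge; apply; apply: (@bouquet_step _ _ _ cycle_len_le ord0 0).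
by have := cycle_len_gt2 ord0; lia.
Qed.

End Construction.

Theorem mainTheorem14 :
  forall N : nat, exists (n : nat) (e : rel 'I_n),
    N < n /\ simple_graph e /\ connected_graph e /\
    one_point_union_of_regular e /\ chi_la_eq e 2.
Proof.
move=> N; have K_gt1 : 1 < N.+2 by [].
have len_gt2 := cycle_len_gt2 K_gt1; have len_le := cycle_len_le K_gt1.
eexists; exists (bouquet (W := 2 * (2 * N.+2 + 1)) (len := cycle_len (K := N.+2))).
split; first by have := len_le_order len_le ord0; rewrite /cycle_len /=; lia.
split; first exact: bouquet_simple.
split; first exact: bouquet_connected.
split; first exact: bouquet_one_point_union.
exact: chi_la_bouquet.
Qed.
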